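(* Let $\Phi$ be a (finite crystallographic, possibly non-reduced) root system and $V\le\mathbb R\Phi$ a subspace. 1. If $V$ is $1$-small and $\alpha\in\Phi\cap V$, then there is an irreducible saturated root subsystem $\alpha\in\Psi\subseteq\Phi$ of rank $2$ with $\mathbb R\Psi\cap V=\mathbb R\alpha$. 2. If $V$ is $2$-small and $\alpha,\beta\in\Phi$ are linearly independent with $(\mathbb R\alpha+\mathbb R\beta)\cap V$ one-dimensional, then there is an irreducible saturated root subsystem $\alpha\in\Psi\subseteq\Phi$ of rank $2$ with $\beta\notin\Psi$ and $(\mathbb R\Psi+\mathbb R\beta)\cap V$ one-dimensional. 3. If $V$ is $2$-small and $\alpha,\beta\in\Phi\cap V$ are linearly independent, then there is an irreducible saturated root subsystem $\alpha\in\Psi\subseteq\Phi$ of rank $2$ with $\beta\notin\Psi$ and $\mathbb R\Psi\cap V=\mathbb R\alpha$. 4. If $V$ is $2$-small, $\alpha\in\Phi\cap V$ and $\beta,\gamma\in\Phi\setminus V$ are linearly independent, and $(\mathbb R\alpha+\mathbb R\beta+\mathbb R\gamma)\cap V$ is two-dimensional, then there is an irreducible saturated root subsystem $\alpha\in\Psi\subseteq\Phi$ of rank $2$ with $\beta,\gamma\notin\Psi$ such that both $(\mathbb R\Psi+\mathbb R\beta)\cap V$ and $(\mathbb R\Psi+\mathbb R\gamma)\cap V$ are one-dimensional. 5. If $V$ is $2$-small, the roots $\alpha\in\Phi\cap V$ and $\beta,\gamma\in\Phi\setminus V$ are linearly independent, and $(\mathbb R\alpha+\mathbb R\beta+\mathbb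 R\gamma)\cap V$ is two-dimensional, then there is an irreducible saturated root subsystem $\gamma\in\Psi\subseteq\Phi$ of rank $2$ such that $\mathbb R\alpha+\mathbb R\beta+\mathbb R\Psi$ is four-dimensional and $(\mathbb R\Psi+\mathbb R\alpha+\mathbb R\beta)\cap V$ is two-dimensional.
   Context: A subspace $V\le\mathbb R\Phi$ is $k$-small if for every irreducible component $\Psi$ of $\Phi$ the codimension of $V\cap\mathbb R\Psi$ in $\mathbb R\Psi$ is at least $k$. A saturated root subsystem of $\Phi$ is a subset of the form $\Phi\cap W$ for a linear subspace $W$. *)

From HB Require Import structures.
From mathcomp Require Import all_boot all_order all_algebra.
From mathcomp Require Import reals.
Set Implicit Arguments. Unset Strict Implicit. Unset Printing Implicit Defensive.
Import Order.TTheory GRing.Theory Num.Theory.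
Local Open Scope ring_scope.

Section RootSystems.
Variables (R : realType) (n : nat).
Implicit Types (u v x y a b : 'rV[R]_n) (Phi Psi : seq 'rV[R]_n).

Definition dotv u v : R := (u *m v^T) 0 0.

Definition refl a x : 'rV[R]_n := x - ((2 * dotv x a) / dotv a a) *: a.

(* finite crystallographic root system (possibly non-reduced) in its span *)
Definition root_system Phi : Prop :=
  [/\ (0 : 'rV[R]_n) \notin Phi,
      (forall a b, a \in Phi -> b \in Phi -> refl a b \in Phi) &
      (forall a b, a \in Phi -> b \in Phi ->
         (2 * dotv b a) / dotv a a \is a Num.int)].

Definition irreducible Psi : Prop :=
  Psi != [::] /\
  forall P : pred 'rV[R]_n,
    (forall x y, x \in Psi -> y \in Psi -> P x -> ~~ P y -> dotv x y = 0) ->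
    (forall x, x \in Psi -> P x) \/ (forall x, x \in Psi -> ~~ P x).

Definition irr_component Phi Psi : Prop :=
  [/\ {subset Psi <= Phi}, irreducible Psi &
      forall x y, x \in Psi -> y \in Phi -> dotv x y != 0 -> y \in Psi].

Definition saturated Phi Psi : Prop :=
  exists W : {vspace 'rV[R]_n}, forall x, (x \in Psi) = (x \in Phi) && (x \in W).

Definition k_small Phi (V : {vspace 'rV[R]_n}) (k : nat) : Prop :=
  forall Psi, irr_component Phi Psi ->
    (k <= \dim <<Psi>> - \dim (V :&: <<Psi>>))%N.

Definition irr_sat_rank2 Phi Psi : Prop :=
  [/\ saturated Phi Psi, irreducible Psi & \dim <<Psi>>%VS = 2%N].

End RootSystems.

(* Every part rests on one observation: if V is k-small, a is a root and W is a
   subspace containing V and a with dim W < dim V + k, then some root d with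
   (a, d) <> 0 lies outside W.  Otherwise the reflections s_d propagate
   "every root not orthogonal to x lies in W" along the connectivity graph of
   non-orthogonality, so the whole irreducible component of a lies in W, and
   its span would meet V in codimension < k.  The roots of Phi in the plane
   Ra + Rd then form an irreducible saturated subsystem of rank 2 whose span
   meets W only in Ra; each part of the theorem is this fact for a suitable W. *)
From HB Require Import structures.
From mathcomp Require Import all_boot all_order all_algebra.
From mathcomp Require Import reals.
From mathcomp Require Import zify.
Set Implicit Arguments. Unset Strict Implicit. Unset Printing Implicit Defensive.
Import Order.TTheory GRing.Theory Num.Theory.
Local Open Scope ring_scope.

Section DotProduct.
Variables (R : realType) (n : nat).
Implicit Types (u v w a x y : 'rV[R]_n).

Lemma dotvE u v : dotv u v = \sum_k u 0 k * v 0 k.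
Proof. by rewrite /dotv !mxE; apply: eq_bigr => k _; rewrite mxE. Qed.

Lemma dotvC u v : dotv u v = dotv v u.
Proof. by rewrite !dotvE; apply: eq_bigr => k _; rewrite mulrC. Qed.

Lemma dotvDl u v w : dotv (u + w) v = dotv u v + dotv w v.
Proof. by rewrite !dotvE -big_split; apply: eq_bigr => k _; rewrite mxE mulrDl. Qed.

Lemma dotvZl s u v : dotv (s *: u) v = s * dotv u v.
Proof. by rewrite !dotvE mulr_sumr; apply: eq_bigr => k _; rewrite mxE mulrA. Qed.

Lemma dotvZr s u v : dotv v (s *: u) = s * dotv v u.
Proof. by rewrite dotvC dotvZl dotvC. Qed.

Lemma dotvBr u v w : dotv v (u - w) = dotv v u - dotv v w.
Proof. by rewrite !dotvE -sumrB; apply: eq_bigr => k _; rewrite !mxE mulrBr. Qed.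

Lemma dotv_eq0 u : (dotv u u == 0) = (u == 0).
Proof.
apply/idP/eqP => [|->]; last by rewrite dotvE big1 // => k _; rewrite mxE mul0r.
rewrite dotvE => /eqP u2_0; apply/rowP => k; rewrite mxE.
have sq_ge0 i : xpredT i -> 0 <= u 0 i * u 0 i by rewrite -expr2 sqr_ge0.
by have /eqP := @psumr_eq0P _ _ _ _ sq_ge0 u2_0 k isT; rewrite mulf_eq0 orbb => /eqP.
Qed.

Lemma refl_addK a x : refl a x + ((2 * dotv x a) / dotv a a) *: a = x.
Proof. exact: subrK. Qed.

Lemma dotv_refl a x y :
  dotv y (refl a x) = dotv y x - ((2 * dotv x a) / dotv a a) * dotv y a.
Proof. by rewrite dotvBr dotvZr. Qed.

End DotProduct.

Section Subspaces.
Variables (R : realType) (n : nat).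
Implicit Types (U W : {vspace 'rV[R]_n}) (a b c d : 'rV[R]_n).

Lemma capv_addline U W d :
  d \notin (U + W)%VS -> ((U + <[d]>) :&: W)%VS = (U :&: W)%VS.
Proof.
move=> dUW; apply/subv_anti/andP; split; last exact: capvS (addvSl _ _) (subvv _).
apply/subvP => x /memv_capP[/memv_addP[u Uu [v /vlineP[t ->] ->]] xW].
have [t0 | t0] := eqVneq t 0.
  by rewrite t0 scale0r addr0 in xW *; rewrite memv_cap Uu.
case/negP: dUW; rewrite -[d](scalerK t0) -[t *: d](addKr u).
rewrite memvZ // memvD ?rpredN //.
  exact: (subvP (addvSl U W)).
exact: (subvP (addvSr U W)).
Qed.

Lemma dim_addline U d : d \notin U -> \dim (U + <[d]>) = (\dim U).+1.
Proof.
move=> dU; have d0 : d != 0 by apply: contraNneq dU => ->; apply: mem0v.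
rewrite dimv_disjoint_sum ?dim_vline ?d0 ?addn1 //.
apply/eqP; rewrite -subv0; apply/subvP => x /memv_capP[xU /vlineP[t xE]].
rewrite memv0 xE; have [-> | t0] := eqVneq t 0; first by rewrite scale0r.
by case/negP: dU; rewrite -(scalerK t0 d) memvZ // -xE.
Qed.

Lemma capv_plane W a d :
  a \in W -> d \notin W -> ((<[a]> + <[d]>) :&: W)%VS = <[a]>%VS.
Proof.
move=> aW dW; rewrite capv_addline; first by apply/capv_idPl; rewrite -memvE.
by rewrite (addv_idPr _) // -memvE.
Qed.

Lemma mem_plane_cap W a d x :
  a \in W -> d \notin W -> x \in (<[a]> + <[d]>)%VS -> x \in W -> x \in <[a]>%VS.
Proof. by move=> aW dW xP xW; rewrite -(capv_plane aW dW) memv_cap xP. Qed.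

Lemma notin_line_free2 a b : free [:: a; b] -> b \notin <[a]>%VS.
Proof.
rewrite (@perm_free _ _ _ [:: b; a]) ?free_cons ?span_seq1; first by case/andP.
by rewrite (perm_catC [:: a] [:: b]).
Qed.

Lemma span2 a b : <<[:: a; b]>>%VS = (<[a]> + <[b]>)%VS.
Proof. by rewrite span_cons span_seq1. Qed.

Lemma span3 a b c : <<[:: a; b; c]>>%VS = (<[a]> + <[b]> + <[c]>)%VS.
Proof. by rewrite span_cons span2 addvA. Qed.

Lemma dim_add_lt U V k :
  (\dim U < \dim (U :&: V) + k)%N -> (\dim (U + V) < \dim V + k)%N.
Proof. by have := dimv_sum_cap U V; lia. Qed.

End Subspaces.

Lemma connect_ind (T : finType) (e : rel T) (Q : pred T) x :
  (forall y z, connect e x y -> e y z -> Q y -> Q z) -> Q x ->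
  forall y, connect e x y -> Q y.
Proof.
move=> stepQ Qx _ /connectP[p + ->].
elim/last_ind: p => [//|p z IHp]; rewrite rcons_path last_rcons => /andP[xp pz].
by apply: stepQ pz (IHp xp); apply/connectP; exists p.
Qed.

Section Component.
Variables (R : realType) (n : nat) (Phi : seq 'rV[R]_n).
Hypothesis Phi_rs : root_system Phi.

Local Notation m := (size Phi).
Local Notation root i := (nth 0 Phi (nat_of_ord i)).

Definition root_linked := [rel i j : 'I_m | dotv (root i) (root j) != 0].

Definition root_component (i : 'I_m) :=
  [seq root j | j <- enum 'I_m & connect root_linked i j].

Lemma root_in_Phi (i : 'I_m) : root i \in Phi.
Proof. exact: mem_nth. Qed.

Lemma root_of_Phi x : x \in Phi -> exists i : 'I_m, x = root i.
Proof.
by move=> xP; exists (Ordinal (etrans (index_mem x Phi) xP)); rewrite nth_index.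
Qed.

Lemma dotv_root_neq0 (i : 'I_m) : dotv (root i) (root i) != 0.
Proof.
rewrite dotv_eq0; case: Phi_rs => Phi0 _ _.
by apply: contraNneq Phi0 => <-; apply: root_in_Phi.
Qed.

Lemma root_componentP i x :
  reflect (exists2 j, connect root_linked i j & x = root j) (x \in root_component i).
Proof.
apply: (iffP mapP) => [[j] | [j ij ->]].
  by rewrite mem_filter mem_enum andbT => ij ->; exists j.
by exists j; rewrite // mem_filter mem_enum andbT.
Qed.

Lemma root_component_self i : root i \in root_component i.
Proof. by apply/root_componentP; exists i. Qed.

Lemma root_component_irr i : irr_component Phi (root_component i).
Proof.
split.
- by move=> x /root_componentP[j _ ->]; apply: root_in_Phi.
- split=> [|P orthP]; first by apply: contraTneq (root_component_self i) => ->.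
  have sameP : forall j, connect root_linked i j -> P (root j) == P (root i).
    apply: (@connect_ind _ _ (fun j => P (root j) == P (root i))) => [|//].
    move=> j k ij jk /eqP Pj.
    have Cj : root j \in root_component i by apply/root_componentP; exists j.
    have Ck : root k \in root_component i.
      by apply/root_componentP; exists k => //; apply: connect_trans ij (connect1 _).
    rewrite -Pj; apply: contraNeq jk => nP; apply/eqP.
    have [Pjt | Pjf] := boolP (P (root j)).
      by apply: orthP => //; move: nP; rewrite Pjt; case: (P (root k)).
    rewrite dotvC; apply: orthP => //.
    by move: nP; rewrite (negbTE Pjf); case: (P (root k)).
  have [Pi | nPi] := boolP (P (root i)); [left | right] => _ /root_componentP[j ij ->];
    by rewrite (eqP (sameP j ij)).
- move=> x y /root_componentP[j ij ->] /root_of_Phi[k ->] jk.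
  by apply/root_componentP; exists k => //; apply: connect_trans ij (connect1 _).
Qed.

Lemma span_root_component_sub i (W : {vspace 'rV[R]_n}) :
  {in Phi, forall y, dotv (root i) y != 0 -> y \in W} ->
  (<<root_component i>> <= W)%VS.
Proof.
case: Phi_rs => _ reflP _ Wi.
pose Q (j : 'I_m) := all (fun y => (dotv (root j) y == 0) || (y \in W)) Phi.
have QiP j : reflect {in Phi, forall y, dotv (root j) y != 0 -> y \in W} (Q j).
  by apply: (iffP allP) => Qj y yP; move: (Qj y yP); case: eqP => //= _ Qy; auto.
have Qlinked j k : root_linked j k -> Q j -> Q k.
  move=> /= jk /QiP Qj; apply/QiP => y yP ky.
  have [jy | /(Qj y yP)//] := eqVneq (dotv (root j) y) 0.
  set t := (2 * dotv y (root k)) / dotv (root k) (root k).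
  have t0 : t != 0 by rewrite !mulf_neq0 ?invr_eq0 ?dotv_root_neq0 ?pnatr_eq0 // dotvC.
  have sW : refl (root k) y \in W.
    apply: Qj; first by apply: reflP; rewrite ?root_in_Phi.
    by rewrite dotv_refl jy sub0r oppr_eq0 mulf_neq0.
  have kW : root k \in W by apply: Qj; rewrite ?root_in_Phi.
  by rewrite -(refl_addK (root k) y) memvD ?memvZ.
apply/span_subvP => x /root_componentP[j ij ->].
have /QiP Qj := connect_ind (fun j k _ => Qlinked j k) (introT (QiP i) Wi) ij.
exact: Qj (root_in_Phi j) (dotv_root_neq0 j).
Qed.

End Component.

Section SmallSubspaces.
Variables (R : realType) (n : nat) (Phi : seq 'rV[R]_n).
Implicit Types (V W : {vspace 'rV[R]_n}) (a b c d : 'rV[R]_n).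

Lemma k_small_dim_add V k Psi :
  k_small Phi V k -> irr_component Phi Psi -> (\dim V + k <= \dim (V + <<Psi>>))%N.
Proof.
move=> smallV /smallV codim.
rewrite -(leq_add2r (\dim (V :&: <<Psi>>))) dimv_sum_cap -addnA leq_add2l.
by rewrite addnC -leq_subRL // dimvS ?capvSr.
Qed.

Lemma exists_nonorth_root_notin V W k a :
  root_system Phi -> k_small Phi V k -> a \in Phi ->
  (V <= W)%VS -> (\dim W < \dim V + k)%N ->
  exists2 d, d \in Phi & (dotv a d != 0) && (d \notin W).
Proof.
move=> rsPhi smallV aP VW dimW; apply/hasP/negPn/negP => /hasPn notinW.
have [i ai] := root_of_Phi aP.
have : (<<root_component i>> <= W)%VS.
  apply: span_root_component_sub => // y yP; rewrite -ai => ay.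
  by have := notinW y yP; rewrite ay negbK.
move=> /(addvS VW)/dimvS; rewrite addvv.
have := k_small_dim_add smallV (root_component_irr i); lia.
Qed.

Lemma irr_sat_rank2_plane a d :
  0 \notin Phi -> a \in Phi -> d \in Phi -> dotv a d != 0 -> d \notin <[a]>%VS ->
  exists2 Psi, irr_sat_rank2 Phi Psi & a \in Psi /\ <<Psi>>%VS = (<[a]> + <[d]>)%VS.
Proof.
move=> Phi0 aP dP ad da.
set P := (<[a]> + <[d]>)%VS; set Psi := [seq x <- Phi | x \in P].
have memPsi x : (x \in Psi) = (x \in Phi) && (x \in P) by rewrite mem_filter andbC.
have aPsi : a \in Psi by rewrite memPsi aP (subvP (addvSl _ _)) ?memv_line.
have dPsi : d \in Psi by rewrite memPsi dP (subvP (addvSr _ _)) ?memv_line.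
have spanPsi : <<Psi>>%VS = P.
  apply/subv_anti/andP; split; first by apply/span_subvP => x; rewrite memPsi => /andP[].
  by rewrite subv_add -!memvE !memv_span.
exists Psi; last by [].
have a0 : a != 0 by apply: contraNneq Phi0 => <-.
split; first by exists P.
- split=> [|Q orthQ]; first by apply: contraTneq aPsi => ->.
  (* A root of the plane orthogonal to both a and d is orthogonal to itself. *)
  have nonorth x : x \in Psi -> dotv a x = 0 -> dotv d x = 0 -> False.
    rewrite memPsi => /andP[xP /memv_addP[_ /vlineP[s ->] [_ /vlineP[t ->] xE]]] ax dx.
    have /eqP : dotv x x = 0 by rewrite {1}xE dotvDl !dotvZl ax dx !mulr0 addr0.
    by rewrite dotv_eq0 => /eqP x0; move: Phi0; rewrite -x0 xP.
  have [Qa | nQa] := boolP (Q a); [left | right] => x xPsi;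
    [apply/negPn/negP | apply/negP] => Qx.
  + have Qd : Q d by apply/negPn/negP => nQd; case/eqP: ad; apply: orthQ.
    by apply: (nonorth x xPsi); apply: orthQ.
  + have nQd : ~~ Q d.
      by apply/negP => Qd; case/eqP: ad; rewrite dotvC; apply: orthQ.
    by apply: (nonorth x xPsi); rewrite dotvC; apply: orthQ.
- by rewrite spanPsi dim_addline // dim_vline a0.
Qed.

Lemma exists_irr_sat_rank2_avoiding V W k a :
  root_system Phi -> k_small Phi V k -> a \in Phi -> a \in W ->
  (V <= W)%VS -> (\dim W < \dim V + k)%N ->
  exists Psi d, [/\ irr_sat_rank2 Phi Psi, a \in Psi, d \notin W &
                     <<Psi>>%VS = (<[a]> + <[d]>)%VS].
Proof.
move=> rsPhi smallV aP aW VW dimW.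
have [d dP /andP[ad dW]] := exists_nonorth_root_notin rsPhi smallV aP VW dimW.
have da : d \notin <[a]>%VS by apply: contra dW => /vlineP[t ->]; rewrite memvZ.
have [Phi0 _ _] := rsPhi.
have [Psi irrPsi [aPsi spanPsi]] := irr_sat_rank2_plane Phi0 aP dP ad da.
by exists Psi, d.
Qed.

Lemma notin_plane_subsystem W Psi a d x :
  <<Psi>>%VS = (<[a]> + <[d]>)%VS -> a \in W -> d \notin W ->
  x \in W -> x \notin <[a]>%VS -> x \notin Psi.
Proof.
move=> spanPsi aW dW xW; apply: contra => xPsi.
by apply: mem_plane_cap aW dW _ xW; rewrite -spanPsi memv_span.
Qed.

Lemma small_rank2_cap_line V k a :
  root_system Phi -> k_small Phi V k -> (0 < k)%N -> a \in Phi -> a \in V ->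
  exists Psi, [/\ irr_sat_rank2 Phi Psi, a \in Psi,
                  {in V, forall x, x \notin <[a]>%VS -> x \notin Psi} &
                  (<<Psi>> :&: V)%VS = <[a]>%VS].
Proof.
move=> rsPhi smallV k_gt0 aP aV.
have [|Psi [d [irrPsi aPsi dV spanPsi]]] :=
  exists_irr_sat_rank2_avoiding rsPhi smallV aP aV (subvv V).
  by rewrite -[X in (X < _)%N]addn0 ltn_add2l.
exists Psi; split=> //; last by rewrite spanPsi capv_plane.
by move=> x xV; apply: notin_plane_subsystem spanPsi aV dV xV.
Qed.

Lemma small_rank2_cap_dim1 V a b :
  root_system Phi -> k_small Phi V 2 -> a \in Phi -> b \in Phi -> free [:: a; b] ->
  \dim ((<[a]> + <[b]>) :&: V)%VS = 1%N ->
  exists Psi, [/\ irr_sat_rank2 Phi Psi, a \in Psi, b \notin Psi &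
                  \dim ((<<Psi>> + <[b]>) :&: V)%VS = 1%N].
Proof.
move=> rsPhi smallV aP bP freeab capU; set U := (<[a]> + <[b]>)%VS in capU.
have aW : a \in (U + V)%VS by rewrite !(subvP (addvSl _ _)) ?memv_line.
have bW : b \in (U + V)%VS.
  by rewrite (subvP (addvSl _ _)) ?(subvP (addvSr _ _)) ?memv_line.
have [|Psi [d [irrPsi aPsi dW spanPsi]]] :=
  exists_irr_sat_rank2_avoiding rsPhi smallV aP aW (addvSr U V).
  by apply: dim_add_lt; rewrite capU /U -span2 (eqP freeab).
exists Psi; split=> //.
  exact: notin_plane_subsystem spanPsi aW dW bW (notin_line_free2 freeab).
by rewrite spanPsi -addvA (addvC <[d]>%VS) addvA capv_addline.
Qed.

Lemma small_rank2_avoid2_cap_dim1 V a b c :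
  root_system Phi -> k_small Phi V 2 -> a \in Phi -> a \in V ->
  b \notin V -> c \notin V ->
  \dim ((<[a]> + <[b]> + <[c]>) :&: V)%VS = 2%N ->
  exists Psi, [/\ irr_sat_rank2 Phi Psi, a \in Psi, b \notin Psi, c \notin Psi &
                  \dim ((<<Psi>> + <[b]>) :&: V)%VS = 1%N /\
                  \dim ((<<Psi>> + <[c]>) :&: V)%VS = 1%N].
Proof.
move=> rsPhi smallV aP aV bV cV capX; set X := (<[a]> + <[b]> + <[c]>)%VS in capX.
have XW : (X <= X + V)%VS := addvSl X V.
have abW : (<[a]> + <[b]> <= X + V)%VS := subv_trans (addvSl _ _) XW.
have acW : (<[a]> + <[c]> <= X + V)%VS.
  by rewrite subv_add (subv_trans _ abW) ?addvSl // (subv_trans (addvSr _ _) XW).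
have aW : a \in (X + V)%VS by rewrite (subvP abW) ?(subvP (addvSl _ _)) ?memv_line.
have [|Psi [d [irrPsi aPsi dW spanPsi]]] :=
  exists_irr_sat_rank2_avoiding rsPhi smallV aP aW (addvSr X V).
  by apply: dim_add_lt; rewrite capX /X -span3 (leq_ltn_trans (dim_span _)).
have notinPsi x : x \notin V -> (<[a]> + <[x]> <= X + V)%VS -> x \notin Psi.
  move=> xV axW; apply: notin_plane_subsystem spanPsi aW dW _ _.
    by rewrite (subvP axW) ?(subvP (addvSr _ _)) ?memv_line.
  by apply: contra xV => /vlineP[t ->]; rewrite memvZ.
have capPsi x : x \notin V -> (<[a]> + <[x]> <= X + V)%VS ->
    \dim ((<<Psi>> + <[x]>) :&: V)%VS = 1%N.
  move=> xV axW; rewrite spanPsi -addvA (addvC <[d]>%VS) addvA capv_addline.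
    have [Phi0 _ _] := rsPhi.
    by rewrite capv_plane // dim_vline; case: eqP aP Phi0 => // ->->.
  by apply: contra dW; apply: subvP; rewrite subv_add axW addvSr.
by exists Psi; split; rewrite ?notinPsi ?capPsi.
Qed.

Lemma small_rank2_dim4_cap_dim2 V a b c :
  root_system Phi -> k_small Phi V 2 -> c \in Phi -> free [:: a; b; c] ->
  \dim ((<[a]> + <[b]> + <[c]>) :&: V)%VS = 2%N ->
  exists Psi, [/\ irr_sat_rank2 Phi Psi, c \in Psi,
                  \dim (<[a]> + <[b]> + <<Psi>>)%VS = 4%N &
                  \dim ((<<Psi>> + <[a]> + <[b]>) :&: V)%VS = 2%N].
Proof.
move=> rsPhi smallV cP freeabc capX; set X := (<[a]> + <[b]> + <[c]>)%VS in capX.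
have dimX : \dim X = 3%N by rewrite /X -span3 (eqP freeabc).
have cW : c \in (X + V)%VS.
  by rewrite (subvP (addvSl _ _)) // (subvP (addvSr _ _)) ?memv_line.
have [|Psi [d [irrPsi cPsi dW spanPsi]]] :=
  exists_irr_sat_rank2_avoiding rsPhi smallV cP cW (addvSr X V).
  by apply: dim_add_lt; rewrite capX dimX.
have spanE : (<<Psi>> + <[a]> + <[b]> = X + <[d]>)%VS.
  by rewrite spanPsi -addvA addvC addvA.
exists Psi; split=> //.
  rewrite spanPsi addvA -/X dim_addline ?dimX //.
  by apply: contra dW; apply: subvP; apply: addvSl.
by rewrite spanE capv_addline.
Qed.

End SmallSubspaces.

Theorem mainTheorem2 (R : realType) (n : nat) (Phi : seq 'rV[R]_n)
    (V : {vspace 'rV[R]_n}) :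
  root_system Phi -> (V <= <<Phi>>)%VS ->
  [/\
   (* 1 *)
   (k_small Phi V 1 ->
    forall a, a \in Phi -> a \in V ->
    exists Psi, [/\ irr_sat_rank2 Phi Psi, a \in Psi &
                    (<<Psi>> :&: V)%VS = <[a]>%VS]),
   (* 2 *)
   (k_small Phi V 2 ->
    forall a b, a \in Phi -> b \in Phi -> free [:: a; b] ->
    \dim ((<[a]> + <[b]>) :&: V)%VS = 1%N ->
    exists Psi, [/\ irr_sat_rank2 Phi Psi, a \in Psi, b \notin Psi &
                    \dim ((<<Psi>> + <[b]>) :&: V)%VS = 1%N]),
   (* 3 *)
   (k_small Phi V 2 ->
    forall a b, a \in Phi -> a \in V -> b \in Phi -> b \in V ->
    free [:: a; b] ->
    exists Psi, [/\ irr_sat_rank2 Phi Psi, a \in Psi, b \notin Psi &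
                    (<<Psi>> :&: V)%VS = <[a]>%VS]),
   (* 4 *)
   (k_small Phi V 2 ->
    forall a b c, a \in Phi -> a \in V ->
    b \in Phi -> b \notin V -> c \in Phi -> c \notin V ->
    free [:: b; c] ->
    \dim ((<[a]> + <[b]> + <[c]>) :&: V)%VS = 2%N ->
    exists Psi, [/\ irr_sat_rank2 Phi Psi, a \in Psi, b \notin Psi, c \notin Psi &
                    \dim ((<<Psi>> + <[b]>) :&: V)%VS = 1%N /\
                    \dim ((<<Psi>> + <[c]>) :&: V)%VS = 1%N]) &
   (* 5 *)
   (k_small Phi V 2 ->
    forall a b c, a \in Phi -> a \in V ->
    b \in Phi -> b \notin V -> c \in Phi -> c \notin V ->
    free [:: a; b; c] ->
    \dim ((<[a]> + <[b]> + <[c]>) :&: V)%VS = 2%N ->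
    exists Psi, [/\ irr_sat_rank2 Phi Psi, c \in Psi,
                    \dim (<[a]> + <[b]> + <<Psi>>)%VS = 4%N &
                    \dim ((<<Psi>> + <[a]> + <[b]>) :&: V)%VS = 2%N])].
Proof.
move=> rsPhi _; split.
- move=> small1 a aP aV.
  have [Psi [irrPsi aPsi _ capPsi]] := small_rank2_cap_line rsPhi small1 isT aP aV.
  by exists Psi.
- by move=> small2 a b aP bP; apply: small_rank2_cap_dim1.
- move=> small2 a b aP aV bP bV freeab.
  have [Psi [irrPsi aPsi notinPsi capPsi]] := small_rank2_cap_line rsPhi small2 isT aP aV.
  by exists Psi; split; rewrite ?notinPsi ?notin_line_free2.
- by move=> small2 a b c aP aV _ bV _ cV _; apply: small_rank2_avoid2_cap_dim1.
- by move=> small2 a b c _ _ _ _ cP _; apply: small_rank2_dim4_cap_dim2.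
Qed.
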